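(* Let $m\ge2$, $w$ an infinite periodic or Sturmian word over $\{0,1\}$, and $A=A(m,w)$ with the $\mathbb{Z}_2$-grading in which $z_1^{(1)},a$ are even and $b$ is odd. Then there is $n_0$ such that $c_{k,n-k}(A)\le 2n^2$ for all $n\ge n_0$ and all $0\le k\le n$.
   Context: $F$ is a field of characteristic zero. $A(m,w)$: basis $\{a,b,z_j^{(i)}: i\ge1,1\le j\le m+w_i\}$, products $z_j^{(i)}a=z_{j+1}^{(i)}$ for $j<m+w_i$, $z_{m+w_i}^{(i)}b=z_1^{(i+1)}$, all other products zero. The grading: $A_0=\mathrm{span}\{a,z_j^{(i)}:i\text{ odd}\}$, $A_1=\mathrm{span}\{b,z_j^{(i)}:i\text{ even}\}$. Sturmian: exactly $n+1$ distinct subwords of length $n$ for all $n$. $c_{k,n-k}(A)=\dim P_{k,n-k}/(P_{k,n-k}\cap Id^{gr}(A))$, where $P_{k,n-k}$ is the space of polynomials in the free nonassociative algebra multilinear in even variables $x_1,\dots,x_k$ and odd variables $y_1,\dots,y_{n-k}$, and $Id^{gr}(A)$ is the ideal of graded identities of $A$ (polynomials vanishing whenever even variables take values in $A_0$ and odd in $A_1$). *)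

From HB Require Import structures.
From mathcomp Require Import all_boot all_order all_algebra.
From Stdlib Require Import ClassicalEpsilon.
Set Implicit Arguments. Unset Strict Implicit. Unset Printing Implicit Defensive.
Import GRing.Theory.
Local Open Scope ring_scope.

(* An infinite word w = w_1 w_2 w_3 ... is a function w : nat -> bool;
   the letter w_i (i >= 1) is [w i] (true = 1, false = 0); [w 0] is unused. *)

Definition factor (w : nat -> bool) (i n : nat) : seq bool :=
  mkseq (fun t => w (i + t)%N) n.

Definition periodic_word (w : nat -> bool) : Prop :=
  exists p : nat, (0 < p)%N /\ forall i, (1 <= i)%N -> w (i + p)%N = w i.

Definition sturmian_word (w : nat -> bool) : Prop :=
  forall n : nat, exists s : seq (seq bool),
    [/\ uniq s, size s = n.+1 &
        forall u, u \in s <-> exists2 i, (1 <= i)%N & u = factor w i n].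

(* Basis: inl false = a, inl true = b, inr (i, j) = z_j^{(i)}. *)
Definition basis := (bool + nat * nat)%type.
Definition ba : basis := inl false.
Definition bb : basis := inl true.
Definition bz (i j : nat) : basis := inr (i, j).

Definition validB (m : nat) (w : nat -> bool) (x : basis) : bool :=
  match x with
  | inl _ => true
  | inr (i, j) => (1 <= i)%N && (1 <= j <= m + w i)%N
  end.

(* product of basis elements: None means 0 *)
Definition mulB (m : nat) (w : nat -> bool) (x y : basis) : option basis :=
  match x, y with
  | inr (i, j), inl false => if (j < m + w i)%N then Some (bz i j.+1) else None
  | inr (i, j), inl true  => if j == (m + w i)%N then Some (bz i.+1 1) else None
  | _, _ => None
  end.

(* Z_2-degree of a basis element (false = even, true = odd):
   a even, b odd, z_j^{(i)} even iff i odd. *)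
Definition degB (x : basis) : bool :=
  match x with
  | inl c => c
  | inr (i, _) => ~~ odd i
  end.

(* elements of A: finite formal linear combinations of basis elements *)
Definition elA (F : fieldType) := seq (F * basis).

Definition coefA (F : fieldType) (u : elA F) (e : basis) : F :=
  \sum_(p <- u | p.2 == e) p.1.

Definition scaleA (F : fieldType) (c : F) (u : elA F) : elA F :=
  [seq (c * p.1, p.2) | p <- u].

Definition mulA (F : fieldType) (m : nat) (w : nat -> bool) (u v : elA F) : elA F :=
  pmap (fun pq : (F * basis) * (F * basis) =>
          omap (fun e => (pq.1.1 * pq.2.1, e)) (mulB m w pq.1.2 pq.2.2))
       [seq (p, q) | p <- u, q <- v].

Definition homA (F : fieldType) (m : nat) (w : nat -> bool) (g : bool) (u : elA F) : bool :=
  all (fun p => validB m w p.2 && (degB p.2 == g)) u.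

Inductive nmon := NVar of nat | NMul of nmon & nmon.

Fixpoint leaves (t : nmon) : seq nat :=
  match t with NVar i => [:: i] | NMul t1 t2 => leaves t1 ++ leaves t2 end.

(* Variables of P_{k,n-k}: index i < k is the even variable x_{i+1},
   index k <= i < n is the odd variable y_{i-k+1}. *)
Definition multilin (n : nat) (t : nmon) : bool := perm_eq (leaves t) (iota 0 n).

Definition npoly (F : fieldType) := seq (F * nmon).

Definition inP (F : fieldType) (n : nat) (f : npoly F) : bool :=
  all (fun p => multilin n p.2) f.

Fixpoint evalM (F : fieldType) (m : nat) (w : nat -> bool) (s : nat -> elA F)
    (t : nmon) : elA F :=
  match t with
  | NVar i => s i
  | NMul t1 t2 => mulA m w (evalM m w s t1) (evalM m w s t2)
  end.

Definition evalP (F : fieldType) (m : nat) (w : nat -> bool) (s : nat -> elA F)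
    (f : npoly F) : elA F :=
  flatten [seq scaleA p.1 (evalM m w s p.2) | p <- f].

Definition graded_subst (F : fieldType) (m : nat) (w : nat -> bool) (k n : nat)
    (s : nat -> elA F) : Prop :=
  forall i, (i < n)%N -> homA m w (k <= i)%N (s i).

Definition is_gr_identity (F : fieldType) (m : nat) (w : nat -> bool) (k n : nat)
    (f : npoly F) : Prop :=
  forall s, graded_subst m w k n s -> forall e, coefA (evalP m w s f) e = 0.

Definition lincomb (F : fieldType) (cs : seq F) (fs : seq (npoly F)) : npoly F :=
  flatten [seq [seq (cf.1 * p.1, p.2) | p <- cf.2] | cf <- zip cs fs].

Definition indep_mod_Id (F : fieldType) (m : nat) (w : nat -> bool) (k n : nat)
    (fs : seq (npoly F)) : Prop :=
  all (inP n) fs /\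
  forall cs : seq F, size cs = size fs ->
    is_gr_identity m w k n (lincomb cs fs) -> all (fun c => c == 0) cs.

(* c_{k,n-k}(A) = dim P_{k,n-k}/(P_{k,n-k} ∩ Id^gr(A)), i.e. the maximal size
   of a family linearly independent modulo P_{k,n-k} ∩ Id^gr(A). *)
Definition gr_codim (F : fieldType) (m : nat) (w : nat -> bool) (k n : nat) : nat :=
  epsilon (inhabits 0%N) (fun d : nat =>
    (exists fs : seq (npoly F), size fs = d /\ indep_mod_Id m w k n fs) /\
    forall fs : seq (npoly F), indep_mod_Id m w k n fs -> (size fs <= d)%N).

From Pilot Require Import Defs.
From mathcomp Require Import all_boot all_order all_algebra.
From mathcomp Require Import ring zify.
From Stdlib Require Import ClassicalEpsilon.
Set Implicit Arguments. Unset Strict Implicit. Unset Printing Implicit Defensive.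
Import GRing.Theory.
Local Open Scope ring_scope.

(* A nonzero product in A(m,w) has a z on the left and a or b on the right, and
   lies in the span of the z's. Hence under a graded substitution s only
   left-normed monomials x_v x_{r_1} ... x_{r_{n-1}} survive, and such a monomial
   evaluates to a product of a/b-coefficients of the s(r_i) times s(v) acted on by
   the word in a, b given by the parities of r_1, ..., r_{n-1}. Each z_j^(i)
   survives exactly one word of each length, determined by j and a factor of w of
   length about n/m. So a multilinear f is a graded identity as soon as, for every
   head variable v and every such path word, the coefficients of the matching
   left-normed monomials of f sum to zero. These are n * #paths linear conditions,
   and a periodic or Sturmian word has linearly many factors of each length, so
   #paths <= 2n for n large. *)

Section Pairing.
Variables (F : fieldType) (m : nat) (w : nat -> bool).

Definition pairA (u : elA F) (g : basis -> F) : F := \sum_(p <- u) p.1 * g p.2.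

Lemma coefA_pairA u e : coefA u e = pairA u (fun x => (x == e)%:R).
Proof.
rewrite /coefA /pairA big_mkcond /=; apply: eq_bigr => p _.
by case: eqP => _; rewrite ?mulr1 ?mulr0.
Qed.

Lemma pairA_mulA X Y g : pairA (Defs.mulA m w X Y) g =
  \sum_(p <- X) p.1 * \sum_(q <- Y) q.1 * oapp g 0 (mulB m w p.2 q.2).
Proof.
rewrite /pairA /Defs.mulA big_pmap big_allpairs_dep; apply: eq_bigr => p _.
rewrite mulr_sumr; apply: eq_bigr => q _ /=.
by case: (mulB m w p.2 q.2) => [e|] /=; rewrite ?mulr0 // mulrA.
Qed.

Lemma pairA_evalP s f g : pairA (evalP m w s f) g =
  \sum_(p <- f) p.1 * pairA (evalM m w s p.2) g.
Proof.
rewrite /pairA /evalP big_flatten big_map; apply: eq_bigr => p _.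
by rewrite big_map mulr_sumr; apply: eq_bigr => q _; rewrite mulrA.
Qed.

Definition is_zbasis (x : basis) : bool := if x is inr _ then true else false.

Lemma mulA_zbasis (X Y : elA F) : all (fun p => is_zbasis p.2) (Defs.mulA m w X Y).
Proof.
apply/allP => p; rewrite /Defs.mulA mem_pmap => /mapP [[[a x] [b y]] _] /=.
case: x => [c|[i j]] //; case: y => [[]|] //=.
- by case: eqP => //= _ [] ->.
- by case: ifP => //= _ [] ->.
Qed.

Lemma pairA_mulA_zbasis X Y g :
  all (fun p => is_zbasis p.2) Y -> pairA (Defs.mulA m w X Y) g = 0.
Proof.
move=> /allP hY; rewrite pairA_mulA big1 // => p _.
rewrite big1_seq ?mulr0 // => q /andP [_ /hY].
by case: q.2 => // z _; case: p.2 => [?|[??]]; rewrite ?mulr0.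
Qed.

Lemma pairA_mulA_hom X Y g c : homA m w c Y ->
  pairA (Defs.mulA m w X Y) g =
  coefA Y (inl c) * pairA X (fun x => oapp g 0 (mulB m w x (inl c))).
Proof.
move=> /allP hY; rewrite pairA_mulA /pairA mulr_sumr; apply: eq_bigr => p _.
rewrite coefA_pairA /pairA mulrCA; congr (_ * _).
rewrite mulr_suml; apply: eq_big_seq => q /hY /andP [_ /eqP].
case: q.2 => [c' /= ->|[i j] _]; first by rewrite eqxx mulr1.
by rewrite /= mulr0 mul0r; case: p.2 => [?|[??]]; rewrite ?mulr0.
Qed.

End Pairing.

Section PathWords.
Variables (m : nat) (w : nat -> bool).

Fixpoint act_word (ox : option basis) (pi : seq bool) : option basis :=
  if pi is c :: pi' then act_word (obind (fun x => mulB m w x (inl c)) ox) pi'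
  else ox.

Lemma act_word_rcons ox pi c :
  act_word ox (rcons pi c) = obind (fun x => mulB m w x (inl c)) (act_word ox pi).
Proof. by elim: pi ox => [|c' pi IH] ox //=. Qed.

Lemma act_word0 pi : act_word None pi = None.
Proof. by elim: pi. Qed.

(* For [ws r = w (i + r)], the only word of length [L] not annihilating z_j^(i):
   a while j < m + w_i, then b, which moves on to z_1^(i+1). *)
Fixpoint path_word (ws : nat -> bool) (j L : nat) : seq bool :=
  if L is L'.+1 then
    if j == (m + ws 0)%N then true :: path_word (fun r => ws r.+1) 1 L'
    else false :: path_word ws j.+1 L'
  else [::].

Lemma eq_path_word L ws ws' j : ws =1 ws' -> path_word ws j L = path_word ws' j L.
Proof.
elim: L ws ws' j => [|L IH] ws ws' j h //=.
by rewrite h; case: ifP => _; congr (_ :: _); apply: IH.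
Qed.

Lemma path_word_local L ws ws' j K : (1 <= j)%N -> (L + j <= K * m + 1)%N ->
  {in gtn K, ws =1 ws'} -> path_word ws j L = path_word ws' j L.
Proof.
elim: L ws ws' j K => [|L IH] ws ws' j K hj hL h //=.
case: K hL h => [|K] hL h; first by lia.
rewrite h ?inE //; case: ifP => /eqP hj'; congr (_ :: _).
  by apply: (IH _ _ 1 K) => // [|r hr]; [lia | apply: h].
by apply: (IH _ _ j.+1 K.+1) => //; lia.
Qed.

Definition basis_path (x : basis) (L : nat) : seq bool :=
  if x is inr (i, j) then path_word (fun r => w (i + r)) j L else [::].

Lemma act_word_basis_path pi x : act_word (Some x) pi =
  if pi == basis_path x (size pi) then act_word (Some x) (basis_path x (size pi))
  else None.
Proof.
elim: pi x => [|c pi IH] [c0|[i j]] //=; first exact: act_word0.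
rewrite addn0.
have E : path_word (fun r => w (i + r.+1)) 1 (size pi) =
         basis_path (bz i.+1 1) (size pi).
  by apply: eq_path_word => r; rewrite addSnnS.
case: (boolP (j == (m + w i)%N)) => hj.
  have hlt : (j < m + w i)%N = false by rewrite (eqP hj) ltnn.
  case: c => /=; first by rewrite hj E eqseq_cons /=; exact: IH.
  by rewrite hlt act_word0; case: (_ == _ :> seq bool).
case: c => /=.
  by rewrite act_word0; case: (_ == _ :> seq bool); rewrite //= (negbTE hj) act_word0.
case hlt: (j < m + w i)%N; first by rewrite eqseq_cons /=; exact: (IH (bz i j.+1)).
by rewrite act_word0; case: (_ == _ :> seq bool); rewrite //= ?hlt ?act_word0.
Qed.

End PathWords.

Section LeftNormed.
Variables (F : fieldType) (m : nat) (w : nat -> bool) (k : nat).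

Definition var_deg (u : nat) : bool := (k <= u)%N.

Fixpoint left_normed (t : nmon) : option (nat * seq nat) :=
  match t with
  | NVar v => Some (v, [::])
  | NMul t1 (NVar u) => omap (fun p => (p.1, rcons p.2 u)) (left_normed t1)
  | NMul _ _ => None
  end.

Lemma leaves_left_normed t v r : left_normed t = Some (v, r) -> leaves t = v :: r.
Proof.
elim: t v r => [v' |t1 IH1 t2 _] v r /=; first by case=> -> <-.
case: t2 => [u|??] //; case E: (left_normed t1) => [[v' r']|] //= [<- <-].
by rewrite (IH1 _ _ E) -cats1.
Qed.

Definition letter_coef (s : nat -> elA F) (u : nat) : F :=
  coefA (s u) (inl (var_deg u)).

Lemma pairA_evalM s t g :
  {in leaves t, forall u, homA m w (var_deg u) (s u)} ->
  pairA (evalM m w s t) g =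
  if left_normed t is Some (v, r) then
    (\prod_(u <- r) letter_coef s u) *
      pairA (s v) (fun x => oapp g 0 (act_word m w (Some x) (map var_deg r)))
  else 0.
Proof.
elim: t g => [v|t1 IH1 t2 _] g hs /=; first by rewrite big_nil mul1r.
case: t2 hs => [u|t3 t4] hs; last by rewrite pairA_mulA_zbasis // mulA_zbasis.
rewrite (pairA_mulA_hom _ _ (hs u _)); last by rewrite mem_cat mem_seq1 eqxx orbT.
rewrite IH1 => [|x hx]; last by apply: hs; rewrite mem_cat hx.
case: (left_normed t1) => [[v r]|] /=; last by rewrite mulr0.
rewrite map_rcons big_rcons /= mulrA [letter_coef s u * _]mulrC; congr (_ * _).
apply: eq_bigr => p _; rewrite act_word_rcons; congr (_ * _).
by case: (act_word _ _ _ _).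
Qed.

End LeftNormed.

Section MatchCoefficients.
Variables (F : fieldType) (m : nat) (w : nat -> bool) (k n : nat).

Definition left_normed_match (t : nmon) (v : nat) (pi : seq bool) : bool :=
  if left_normed t is Some (v', r) then (v' == v) && (map (var_deg k) r == pi)
  else false.

Definition match_coef (f : Defs.npoly F) (v : nat) (pi : seq bool) : F :=
  \sum_(p <- f) p.1 * (left_normed_match p.2 v pi)%:R.

Definition path_weight (s : nat -> elA F) (g : basis -> F) (v : nat)
    (q : F * basis) : F :=
  (\prod_(u <- rem v (iota 0 n)) letter_coef k s u) * q.1 *
    oapp g 0 (act_word m w (Some q.2) (basis_path m w q.2 n.-1)).

Lemma pairA_evalM_multilin s g t : graded_subst m w k n s -> multilin n t ->
  pairA (evalM m w s t) g = \sum_(v <- iota 0 n) \sum_(q <- s v)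
    path_weight s g v q * (left_normed_match t v (basis_path m w q.2 n.-1))%:R.
Proof.
move=> hs ht; rewrite (pairA_evalM (k := k)) => [|u]; last first.
  by rewrite (perm_mem ht) mem_iota => /andP [_ /hs].
rewrite /left_normed_match; case E: (left_normed t) => [[v0 r]|]; last first.
  by rewrite big1 // => v _; rewrite big1 // => q _; rewrite mulr0.
move: ht; rewrite /multilin (leaves_left_normed E) => ht.
have v0n : v0 \in iota 0 n by rewrite -(perm_mem ht) mem_head.
have hr : perm_eq r (rem v0 (iota 0 n)).
  by rewrite -(perm_cons v0); apply: perm_trans ht (perm_to_rem v0n).
have sr : size r = n.-1 by move/perm_size: ht; rewrite size_iota => <-.
rewrite [RHS](bigD1_seq v0) ?iota_uniq //= [X in _ + X]big1_seq; last first.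
  move=> v /andP [nv _].
  by rewrite big1 // => q _; rewrite eq_sym (negbTE nv) mulr0.
rewrite addr0 (perm_big _ hr) /pairA mulr_sumr; apply: eq_bigr => q _.
rewrite eqxx (act_word_basis_path _ _ (map _ r)) size_map sr /path_weight.
by case: (_ == _); rewrite /= ?mulr0 ?mulr1 //; ring.
Qed.

Lemma pairA_evalP_multilin s g f : graded_subst m w k n s ->
  all (fun p => multilin n p.2) f ->
  pairA (evalP m w s f) g = \sum_(v <- iota 0 n) \sum_(q <- s v)
    path_weight s g v q * match_coef f v (basis_path m w q.2 n.-1).
Proof.
move=> hs; rewrite pairA_evalP; elim: f => [_|p f IH /= /andP [hp /IH IHf]].
  rewrite big_nil big1 // => v _; rewrite big1 // => q _.
  by rewrite /match_coef big_nil mulr0.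
rewrite big_cons IHf (pairA_evalM_multilin _ hs hp) mulr_sumr -big_split.
apply: eq_bigr => v _; rewrite mulr_sumr -big_split; apply: eq_bigr => q _.
by rewrite /match_coef big_cons /=; ring.
Qed.

Variable paths : seq (seq bool).
Hypothesis paths_cover : forall x, validB m w x -> basis_path m w x n.-1 \in paths.

Lemma is_gr_identity_of_match_coef (f : Defs.npoly F) :
  all (fun p => multilin n p.2) f ->
  (forall v pi, (v < n)%N -> pi \in paths -> match_coef f v pi = 0) ->
  is_gr_identity m w k n f.
Proof.
move=> hf hG s hs e; rewrite coefA_pairA pairA_evalP_multilin //.
rewrite big1_seq // => v /andP [_]; rewrite mem_iota => /= vn.
rewrite big1_seq // => q /andP [_ qs].
have /allP /(_ q qs) /andP [vq _] := hs v vn.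
by rewrite hG ?mulr0 // paths_cover.
Qed.

Lemma lincomb_cons c cs (f : Defs.npoly F) fs :
  lincomb (c :: cs) (f :: fs) = [seq (c * p.1, p.2) | p <- f] ++ lincomb cs fs.
Proof. by []. Qed.

Lemma match_coef_lincomb (cs : seq F) fs v pi : size cs = size fs ->
  match_coef (lincomb cs fs) v pi =
    \sum_(i < size fs) cs`_i * match_coef (nth [::] fs i) v pi.
Proof.
elim: fs cs => [|f fs IH] [|c cs] //=.
  by rewrite big_ord0 /match_coef big_nil.
case=> hs.
rewrite big_ord_recl lincomb_cons /match_coef big_cat -IH //= big_map mulr_sumr.
by congr (_ + _); apply: eq_bigr => p _; rewrite mulrA.
Qed.

Lemma multilin_lincomb (cs : seq F) fs :
  all (inP n) fs -> all (fun p => multilin n p.2) (lincomb cs fs).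
Proof.
elim: fs cs => [|f fs IH] [|c cs] //= /andP [hf hfs].
by rewrite lincomb_cons all_cat all_map IH // andbT.
Qed.

Definition match_keys := [seq (v, pi) | v <- iota 0 n, pi <- paths].

Definition match_vec (f : Defs.npoly F) : 'rV[F]_(size match_keys) :=
  \row_(c < size match_keys)
    match_coef f (nth (0%N, [::]) match_keys c).1 (nth (0%N, [::]) match_keys c).2.

(* [match_vec] is linear and its kernel consists of identities. *)
Lemma indep_mod_Id_size (fs : seq (Defs.npoly F)) :
  indep_mod_Id m w k n fs -> (size fs <= n * size paths)%N.
Proof.
move=> [hin hind]; have -> : (n * size paths = size match_keys)%N.
  by rewrite size_allpairs size_iota.
have hfree : free (in_tuple (map match_vec fs)).
  apply/freeP => cf hcf i.
  pose cs := [seq cf j | j <- enum 'I_(size (map match_vec fs))].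
  have scs : size cs = size fs by rewrite size_map size_enum_ord size_map.
  suff /(hind cs scs) /allP hcs : is_gr_identity m w k n (lincomb cs fs).
    by apply/eqP/hcs; rewrite map_f // mem_enum.
  apply: is_gr_identity_of_match_coef; first exact: multilin_lincomb.
  move=> v pi vn hpi; rewrite match_coef_lincomb //.
  have hkey : (v, pi) \in match_keys by apply: allpairs_f; rewrite // mem_iota.
  have hc : (index (v, pi) match_keys < size match_keys)%N by rewrite index_mem.
  have := congr1 (fun M : 'rV_(size match_keys) => M 0 (Ordinal hc)) hcf.
  rewrite summxE mxE => /(etrans _); apply; rewrite -(size_map match_vec fs).
  apply: eq_bigr => j _.
  have hj : (j < size fs)%N by rewrite -(size_map match_vec fs).
  rewrite !mxE (nth_map [::]) // mxE nth_index // (nth_map j) ?size_enum_ord //.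
  by rewrite nth_ord_enum.
have := dimvS (subvf <<in_tuple (map match_vec fs)>>%VS).
by rewrite dimvf (eqP hfree) /= size_map dim_matrix mul1r.
Qed.

End MatchCoefficients.

Lemma gr_codim_le (F : fieldType) m w k n N :
  (forall fs : seq (Defs.npoly F), indep_mod_Id m w k n fs -> (size fs <= N)%N) ->
  (gr_codim F m w k n <= N)%N.
Proof.
move=> hN.
pose Q d := exists fs : seq (Defs.npoly F), size fs = d /\ indep_mod_Id m w k n fs.
pose Qb d := if excluded_middle_informative (Q d) then true else false.
have QbP d : reflect (Q d) (Qb d).
  by rewrite /Qb; case: excluded_middle_informative => h; constructor.
have Q0 : Q 0%N by exists [::]; split => //; split => // -[].
have [|d /QbP [fs [<- /hN]] //|d /QbP Qd maxd] := @ex_maxnP Qb N.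
  by exists 0%N; apply/QbP.
rewrite /gr_codim; set P := fun d : nat => _.
have hP : exists d, P d by exists d; split => // fs hfs; apply/maxd/QbP; exists fs.
by have [[fs [<- /hN]]] := @epsilon_spec _ (inhabits 0%N) P hP.
Qed.

Lemma periodic_word_shift (w : nat -> bool) p :
  (forall i, (1 <= i)%N -> w (i + p)%N = w i) ->
  forall q i, (1 <= i)%N -> w (i + q * p)%N = w i.
Proof.
move=> hw; elim=> [|q IH] i hi; first by rewrite mul0n addn0.
by rewrite mulSnr addnA hw ?IH //; lia.
Qed.

Lemma linear_factor_complexity (w : nat -> bool) :
  periodic_word w \/ sturmian_word w ->
  exists C, forall K, exists S : seq (seq bool),
    (size S <= K.+1 + C)%N /\ forall i, (1 <= i)%N -> factor w i K \in S.
Proof.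
case=> [[p [hp hw]]|hs].
  exists p => K; exists [seq factor w i K | i <- iota 1 p]; split.
    by rewrite size_map size_iota leq_addl.
  move=> i hi; apply/mapP; exists (1 + (i - 1) %% p)%N.
    by rewrite mem_iota; have := ltn_pmod (i - 1) hp; lia.
  apply: eq_mkseq => t.
  have -> : (i + t = (1 + (i - 1) %% p + t) + (i - 1) %/ p * p)%N.
    by have := divn_eq (i - 1) p; lia.
  by rewrite periodic_word_shift //; lia.
exists 0%N => K; have [s [_ hsz hmem]] := hs K; exists s; split.
  by rewrite hsz addn0.
by move=> i hi; apply/hmem; exists i.
Qed.

Definition factor_paths (m L : nat) (S : seq (seq bool)) : seq (seq bool) :=
  [::] :: [seq path_word m (nth false u) j L | j <- iota 1 m.+1, u <- S].

Lemma size_factor_paths m L S : size (factor_paths m L S) = (m.+1 * size S).+1.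
Proof. by rewrite /factor_paths -cat1s size_cat size_allpairs size_iota. Qed.

Lemma basis_path_factor_paths m (w : nat -> bool) L K S : (L + m <= K * m)%N ->
  (forall i, (1 <= i)%N -> factor w i K \in S) ->
  forall x, validB m w x -> basis_path m w x L \in factor_paths m L S.
Proof.
move=> hL hS [c _|[i j] /andP [hi /andP [hj1 hj2]]] /=; rewrite /factor_paths.
  exact: mem_head.
have wi : (w i <= 1)%N by case: (w i).
rewrite inE; apply/orP; right.
rewrite (@path_word_local _ L _ (nth false (factor w i K)) j K) //.
- by apply: allpairs_f; [rewrite mem_iota; lia | exact: hS].
- by lia.
- by move=> r hr; rewrite /factor nth_mkseq.
Qed.

Theorem lemma1 (F : fieldType) (charF0 : [pchar F]%R =i pred0)
    (m : nat) (w : nat -> bool) (hm : (2 <= m)%N)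
    (hw : periodic_word w \/ sturmian_word w) :
  exists n0 : nat, forall n k : nat, (n0 <= n)%N -> (k <= n)%N ->
    (gr_codim F m w k n <= 2 * n ^ 2)%N.
Proof.
have [C hC] := linear_factor_complexity hw.
exists (2 * m.+1 * (C + 4) + 2)%N => n k hn _.
have [S [hS hfac]] := hC (n %/ m + 2)%N.
have hdiv : (n %/ m * m <= n < n %/ m * m + m)%N.
  by rewrite leq_divM /= {1}(divn_eq n m) ltn_add2l ltn_mod; lia.
have hpaths := @basis_path_factor_paths m w n.-1 _ S _ hfac.
apply: gr_codim_le => fs /(indep_mod_Id_size (hpaths _)) /leq_trans; apply.
  by lia.
rewrite size_factor_paths expnS expn1 mulnCA leq_mul2l; apply/orP; right; nia.
Qed.
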